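(* Let $I\subseteq[0,\infty)$ be an interval, let $f:I\to\mathbb{R}$ be twice differentiable on $I^\circ$, and let $a,b\in I^\circ$ with $a<b$ such that $f''\in L^1[a,b]$. Let $q>1$ and $p=\frac{q}{q-1}$. If $|f''|^q$ is quasi-convex on $[a,b]$, then $$\left|\frac{f(a)+f(b)}{2}-\frac{1}{b-a}\int_a^b f(x)\,dx\right|\le \frac{(b-a)^2}{2^{1+\frac1q}}\bigl(\beta(2,p+1)\bigr)^{\frac1p}\left(\max\{|f''(a)|^q,|f''(b)|^q\}\right)^{\frac1q}.$$
   Context: A function $g:[a,b]\to\mathbb{R}$ is quasi-convex on $[a,b]$ if $g(\lambda x+(1-\lambda)y)\le\max\{g(x),g(y)\}$ for all $x,y\in[a,b]$ and $\lambda\in[0,1]$. $\beta(x,y)=\int_0^1 t^{x-1}(1-t)^{y-1}\,dt$ for $x,y>0$. *)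

From Stdlib Require Import Reals Lra ClassicalEpsilon.
Open Scope R_scope.

(* Real power x^y for x >= 0, with the convention 0^y = 0 (y > 0).
   (Stdlib's Rpower 0 y = exp (y * ln 0) = 1, which is wrong at 0.) *)
Definition rpow (x y : R) : R :=
  if Rlt_dec 0 x then Rpower x y else 0.

Definition is_RInt (f : R -> R) (a b l : R) : Prop :=
  exists pr : Riemann_integrable f a b, RiemannInt pr = l.

(* The Riemann integral as a total function (chosen classically; it is the
   actual integral whenever f is Riemann integrable, the integral being unique). *)
Definition RInt (f : R -> R) (a b : R) : R :=
  epsilon (inhabits 0) (is_RInt f a b).

Definition beta (x y : R) : R :=
  RInt (fun t => rpow t (x - 1) * rpow (1 - t) (y - 1)) 0 1.

Definition is_interval (I : R -> Prop) : Prop :=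
  forall x y z, I x -> I z -> x <= y <= z -> I y.

(* Interior of I: Stdlib's Rtopology.interior (a neighbourhood of x lies in I). *)

Definition quasi_convex_on (g : R -> R) (a b : R) : Prop :=
  forall x y lam, a <= x <= b -> a <= y <= b -> 0 <= lam <= 1 ->
    g (lam * x + (1 - lam) * y) <= Rmax (g x) (g y).

(* The proof goes through the classical trapezoid error estimate, which is sharper than the
   stated bound:
   1. Quasi-convexity of |f''|^q on [a,b] gives |f''(x)| <= K := max(|f''(a)|^q, |f''(b)|^q)^(1/q)
      for every x in [a,b] (quasi_convex_le_max).
   2. If |f''| <= K on [a,b] and F' = f, then
        |(b-a)/2 (f a + f b) - (F b - F a)| <= K (b-a)^3 / 12      (trapezoid_error),
      proved by applying the mean value theorem twice to
        x |-> K (x-a)^3/12 +- ((x-a)/2 (f a + f x) - (F x - F a)),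
      whose value and first derivative vanish at a and whose second derivative is >= 0.
      With F x = int_a^x f this yields the bound K (b-a)^2/12 on the normalized error.
   3. beta(2, p+1) = 1/((p+1)(p+2)) (beta_2, by an explicit antiderivative), and since
      (p+1)(p+2) <= 2 * 3^p for p >= 1 the constant of the theorem dominates 1/12
      (trapezoid_constant_le). *)

From Pilot Require Import Defs.
From Stdlib Require Import Reals Lra ClassicalEpsilon.
From Coquelicot Require Import Coquelicot.
Open Scope R_scope.

Lemma rpow_ge0 x y : 0 <= rpow x y.
Proof.
  unfold rpow; destruct (Rlt_dec 0 x); [left; apply exp_pos | lra].
Qed.

Lemma rpow_Rpower x y : 0 < x -> rpow x y = Rpower x y.
Proof. intros; unfold rpow; destruct (Rlt_dec 0 x); [reflexivity | lra]. Qed.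

Lemma rpow_nonpos x y : x <= 0 -> rpow x y = 0.
Proof. intros; unfold rpow; destruct (Rlt_dec 0 x); [lra | reflexivity]. Qed.

Lemma rpow_rpow_inv y q : 0 <= y -> 0 < q -> rpow (rpow y q) (1 / q) = y.
Proof.
  intros Hy Hq. destruct (Req_dec y 0) as [->|Hy0].
  - rewrite (rpow_nonpos 0 q) by lra; apply rpow_nonpos; lra.
  - rewrite (rpow_Rpower y), rpow_Rpower by (try apply exp_pos; lra).
    rewrite Rpower_mult. replace (q * (1 / q)) with 1 by (field; lra).
    apply Rpower_1; lra.
Qed.

Lemma rpow_le_base u v r : 0 <= u <= v -> 0 <= r -> rpow u r <= rpow v r.
Proof.
  intros Huv Hr. destruct (Req_dec u 0) as [->|Hu0].
  - rewrite rpow_nonpos by lra; apply rpow_ge0.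
  - rewrite !rpow_Rpower by lra. apply Rle_Rpower_l; lra.
Qed.

Lemma is_derive_eq (g : R -> R) (x l l' : R) : is_derive g x l -> l = l' -> is_derive g x l'.
Proof. now intros H <-. Qed.

(* Sum, difference, product and division rules for derivatives, stated on real-valued
   lambda terms so that derive_rules can apply them by matching the shape of the function. *)
Lemma is_derive_Rplus (g h : R -> R) (x dg dh : R) :
  is_derive g x dg -> is_derive h x dh -> is_derive (fun t => g t + h t) x (dg + dh).
Proof. exact (is_derive_plus g h x dg dh). Qed.
Lemma is_derive_Rminus (g h : R -> R) (x dg dh : R) :
  is_derive g x dg -> is_derive h x dh -> is_derive (fun t => g t - h t) x (dg - dh).
Proof. exact (is_derive_minus g h x dg dh). Qed.
Lemma is_derive_Rmult (g h : R -> R) (x dg dh : R) :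
  is_derive g x dg -> is_derive h x dh -> is_derive (fun t => g t * h t) x (dg * h x + g x * dh).
Proof. intros; exact (is_derive_mult g h x dg dh H H0 Rmult_comm). Qed.
Lemma is_derive_Rdiv_const (g : R -> R) (c x dg : R) :
  is_derive g x dg -> is_derive (fun t => g t / c) x (dg / c).
Proof.
  intros H. unfold Rdiv. eapply is_derive_eq.
  - exact (is_derive_Rmult g (fun _ => / c) x dg 0 H (is_derive_const _ _)).
  - cbv beta; ring.
Qed.

Ltac derive_rules :=
  repeat match goal with
  | |- is_derive (fun _ => ?c) ?x _ => exact (is_derive_const c x : is_derive _ x 0)
  | |- is_derive (fun t => t) ?x _ => exact (is_derive_id x : is_derive _ x 1)
  | |- is_derive (fun t => _ + _) _ _ => apply is_derive_Rplus
  | |- is_derive (fun t => _ - _) _ _ => apply is_derive_Rminus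
  | |- is_derive (fun t => _ * _) _ _ => apply is_derive_Rmult
  | |- is_derive (fun t => _ / _) _ _ => apply is_derive_Rdiv_const
  end.

Lemma rpow_derivable_at_0 r : 1 < r -> derivable_pt_lim (fun u => rpow u r) 0 0.
Proof.
  intros Hr eps Heps.
  assert (Hdelta : 0 < Rpower eps (1 / (r - 1))) by apply exp_pos.
  exists (mkposreal _ Hdelta). intros h Hh0 Hh; simpl in Hh.
  rewrite Rplus_0_l, (rpow_nonpos 0) by lra.
  destruct (Rlt_or_le 0 h) as [Hpos|Hneg].
  - assert (Hsplit : Rpower h r = Rpower h (r - 1) * h).
    { rewrite <- (Rpower_1 h) at 3 by lra. rewrite <- Rpower_plus. f_equal; ring. }
    rewrite rpow_Rpower, Hsplit by lra.
    (* For h > 0 the difference quotient is h^(r-1), which is < eps once h < eps^(1/(r-1)). *)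
    replace ((Rpower h (r - 1) * h - 0) / h - 0) with (Rpower h (r - 1)) by (field; lra).
    rewrite Rabs_pos_eq by (left; apply exp_pos).
    replace eps with (Rpower (Rpower eps (1 / (r - 1))) (r - 1)).
    + apply Rlt_Rpower_l; [lra | rewrite Rabs_pos_eq in Hh; lra].
    + rewrite Rpower_mult. replace (1 / (r - 1) * (r - 1)) with 1 by (field; lra).
      apply Rpower_1; lra.
  - rewrite rpow_nonpos by lra.
    replace ((0 - 0) / h - 0) with 0 by (field; lra). rewrite Rabs_R0; lra.
Qed.

Lemma rpow_is_derive r u : 1 < r -> is_derive (fun u => rpow u r) u (r * rpow u (r - 1)).
Proof.
  intros Hr. destruct (Rtotal_order u 0) as [Hneg|[->|Hpos]].
  - rewrite rpow_nonpos, Rmult_0_r by lra.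
    apply is_derive_ext_loc with (fun _ => 0); [| exact (is_derive_const 0 u)].
    apply (filter_imp (fun t => t < 0)); [| now apply open_lt].
    intros t Ht; rewrite rpow_nonpos; lra.
  - rewrite rpow_nonpos, Rmult_0_r by lra.
    apply is_derive_Reals, rpow_derivable_at_0; exact Hr.
  - rewrite rpow_Rpower by lra.
    apply is_derive_ext_loc with (fun t => Rpower t r).
    + apply (filter_imp (fun t => 0 < t)); [| now apply open_gt].
      intros t Ht; rewrite rpow_Rpower; auto.
    + apply is_derive_Reals, derivable_pt_lim_power; exact Hpos.
Qed.

Lemma rpow_one_minus_is_derive r t :
  1 < r -> is_derive (fun t => rpow (1 - t) r) t (- (r * rpow (1 - t) (r - 1))).
Proof.
  intros Hr.
  assert (Hlin : is_derive (fun t => 1 - t) t (-1)) by (auto_derive; [exact I | ring]).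
  eapply is_derive_eq; [exact (is_derive_comp _ _ t _ _ (rpow_is_derive r (1 - t) Hr) Hlin) |].
  simpl; unfold scal; simpl; unfold mult; simpl. ring.
Qed.

Lemma Defs_RInt_of_is_RInt (g : R -> R) a b l : is_RInt g a b l -> Defs.RInt g a b = l.
Proof.
  intros H.
  assert (pr : Riemann_integrable g a b) by (apply ex_RInt_Reals_0; exists l; exact H).
  assert (Hpr : RiemannInt pr = l).
  { rewrite <- RInt_Reals. apply is_RInt_unique; exact H. }
  unfold Defs.RInt.
  destruct (epsilon_spec (inhabits 0) (Defs.is_RInt g a b) (ex_intro _ l (ex_intro _ pr Hpr)))
    as [pr' Hpr'].
  rewrite <- Hpr', <- Hpr. apply RiemannInt_P5.
Qed.

Lemma beta_2 p : 1 < p -> beta 2 (p + 1) = 1 / ((p + 1) * (p + 2)).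
Proof.
  intros Hp. unfold beta. apply Defs_RInt_of_is_RInt.
  set (G := fun t => - / (p + 1) * rpow (1 - t) (p + 1) + / (p + 2) * rpow (1 - t) (p + 2)).
  set (g := fun t => rpow (1 - t) p - rpow (1 - t) (p + 1)).
  assert (HG : forall t, is_derive G t (g t)).
  { intro t. eapply is_derive_eq.
    - unfold G; derive_rules; apply rpow_one_minus_is_derive; lra.
    - cbv beta; unfold g.
      replace (p + 1 - 1) with p by ring. replace (p + 2 - 1) with (p + 1) by ring.
      field; lra. }
  assert (Hg : forall t, continuous g t).
  { intro t. apply (@ex_derive_continuous R_AbsRing R_NormedModule).
    eexists. unfold g; derive_rules; apply rpow_one_minus_is_derive; lra. }
  replace (1 / ((p + 1) * (p + 2))) with (minus (G 1) (G 0)).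
  - apply is_RInt_ext with g.
    2: exact (is_RInt_derive G g 0 1 (fun x _ => HG x) (fun x _ => Hg x)).
    intros t Ht. rewrite Rmin_left, Rmax_right in Ht by lra.
    unfold g. rewrite !rpow_Rpower by lra.
    replace (2 - 1) with 1 by ring. replace (p + 1 - 1) with p by ring.
    rewrite Rpower_plus, !Rpower_1 by lra.
    change (Rpower (1 - t) p - Rpower (1 - t) p * (1 - t) = t * Rpower (1 - t) p). ring.
  - unfold G, minus, plus, opp; simpl.
    rewrite Rminus_diag, Rminus_0_r.
    rewrite !(rpow_nonpos 0), !(rpow_Rpower 1) by lra.
    unfold Rpower. rewrite ln_1, !Rmult_0_r, exp_0. field. lra.
Qed.

(* (p+1)(p+2) <= 2 * 3^p for p >= 1, in logarithmic form: with s = p - 1,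
   3^p = 3 exp(s ln 3 / 2)^2 >= 3 (1 + s/2)^2 >= (s+2)(s+3)/2. *)
Lemma ln_quadratic_le p : 1 <= p -> ln ((p + 1) * (p + 2)) <= ln 2 + p * ln 3.
Proof.
  intros Hp.
  assert (Hln3 : 1 <= ln 3).
  { rewrite <- (ln_exp 1). apply ln_le; [apply exp_pos | apply exp_le_3]. }
  set (s := p - 1).
  assert (Hs : 0 <= s) by (unfold s; lra).
  assert (Hexp : exp (p * ln 3) = 3 * (exp (s * ln 3 / 2) * exp (s * ln 3 / 2))).
  { rewrite <- exp_plus. pattern 3 at 2. rewrite <- (exp_ln 3) by lra.
    rewrite <- exp_plus. f_equal; unfold s; field. }
  rewrite <- (ln_exp (p * ln 3)), <- ln_mult by (try lra; apply exp_pos).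
  apply ln_le; [nra |].
  pose proof (exp_ineq1_le (s * ln 3 / 2)).
  assert (s <= s * ln 3) by nra.
  rewrite Hexp. replace p with (s + 1) by (unfold s; ring). nra.
Qed.

(* The constant of theorem2p3, (1/((p+1)(p+2)))^(1/p) / 2^(2-1/p) (note 2 - 1/p = 1 + 1/q),
   dominates the classical trapezoid constant 1/12. *)
Lemma trapezoid_constant_le p :
  1 < p -> 1 / 12 <= Rpower (1 / ((p + 1) * (p + 2))) (1 / p) / Rpower 2 (2 - 1 / p).
Proof.
  intros Hp.
  assert (HP : 0 < (p + 1) * (p + 2)) by nra.
  assert (Hlog : (2 - 1 / p) * ln 2 <= ln 12 + 1 / p * ln (1 / ((p + 1) * (p + 2)))).
  { replace 12 with (2 * 2 * 3) by ring. unfold Rdiv at 3. rewrite Rmult_1_l.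
    rewrite !ln_mult, ln_Rinv by lra.
    pose proof (ln_quadratic_le p ltac:(lra)) as Hq.
    assert (Hu : 0 < 1 / p) by (apply Rdiv_lt_0_compat; lra).
    assert (1 / p * ln ((p + 1) * (p + 2)) <= 1 / p * (ln 2 + p * ln 3))
      by (apply Rmult_le_compat_l; lra).
    replace (1 / p * (ln 2 + p * ln 3)) with (1 / p * ln 2 + ln 3) in * by (field; lra).
    nra. }
  assert (Hcmp : Rpower 2 (2 - 1 / p) <= 12 * Rpower (1 / ((p + 1) * (p + 2))) (1 / p)).
  { unfold Rpower. rewrite <- (exp_ln 12) at 1 by lra. rewrite <- exp_plus.
    destruct Hlog as [Hlt | ->]; [left; apply exp_increasing; lra | right; f_equal; ring]. }
  assert (0 < Rpower 2 (2 - 1 / p)) by apply exp_pos.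
  apply (Rmult_le_reg_r (Rpower 2 (2 - 1 / p))); [lra |].
  field_simplify; lra.
Qed.

Lemma nonneg_of_derive_nonneg (g g' : R -> R) a b :
  (forall c, a <= c <= b -> is_derive g c (g' c)) -> g a = 0 ->
  (forall c, a <= c <= b -> 0 <= g' c) -> forall x, a <= x <= b -> 0 <= g x.
Proof.
  intros Hg Hga Hg' x Hx. destruct (Req_dec x a) as [->|Hxa]; [lra |].
  assert (Hg_Reals : forall c, a <= c <= x -> derivable_pt_lim g c (g' c))
    by (intros c Hc; apply is_derive_Reals, Hg; lra).
  destruct (MVT_cor2 g g' a x ltac:(lra) Hg_Reals) as [c [Hc1 Hc2]].
  pose proof (Hg' c ltac:(lra)). nra.
Qed.

Section Trapezoid.

Variables (f f1 f2 F : R -> R) (a b K : R).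
Hypothesis Hab : a <= b.
Hypothesis HF : forall x, a <= x <= b -> is_derive F x (f x).
Hypothesis Hf : forall x, a <= x <= b -> is_derive f x (f1 x).
Hypothesis Hf1 : forall x, a <= x <= b -> is_derive f1 x (f2 x).
Hypothesis HK : forall x, a <= x <= b -> Rabs (f2 x) <= K.

(* For |s| <= 1, the function x |-> K (x-a)^3/12 + s * (trapezoid error on [a,x]) has
   vanishing value and first derivative at a and nonnegative second derivative. *)
Lemma trapezoid_error_signed s : -1 <= s <= 1 ->
  0 <= K * (b - a) ^ 3 / 12 + s * ((b - a) / 2 * (f a + f b) - (F b - F a)).
Proof.
  intros Hs.
  set (psi := fun x => K * ((x - a) * (x - a) * (x - a)) / 12
                       + s * ((x - a) / 2 * (f a + f x) - (F x - F a))).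
  set (dpsi := fun x => K * ((x - a) * (x - a)) / 4
                        + s * ((f a + f x) / 2 + (x - a) / 2 * f1 x - f x)).
  set (ddpsi := fun x => (x - a) / 2 * (K + s * f2 x)).
  assert (Hbounds : forall x, a <= x <= b -> - K <= f2 x <= K).
  { intros x Hx. apply Rabs_le_between, HK, Hx. }
  assert (Hddpsi : forall x, a <= x <= b -> 0 <= ddpsi x).
  { intros x Hx. pose proof (Hbounds x Hx). unfold ddpsi.
    apply Rmult_le_pos; [lra | nra]. }
  assert (Hdpsi : forall x, a <= x <= b -> is_derive dpsi x (ddpsi x)).
  { intros x Hx. eapply is_derive_eq; [unfold dpsi; derive_rules; auto |].
    cbv beta; unfold ddpsi; field. }
  assert (Hpsi : forall x, a <= x <= b -> is_derive psi x (dpsi x)).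
  { intros x Hx. eapply is_derive_eq; [unfold psi; derive_rules; auto |].
    cbv beta; unfold dpsi; field. }
  assert (Hdpsi_nonneg : forall x, a <= x <= b -> 0 <= dpsi x).
  { apply (nonneg_of_derive_nonneg dpsi ddpsi a b Hdpsi); [unfold dpsi; field | exact Hddpsi]. }
  pose proof (nonneg_of_derive_nonneg psi dpsi a b Hpsi ltac:(unfold psi; field) Hdpsi_nonneg b
                ltac:(lra)) as H.
  unfold psi in H. replace ((b - a) ^ 3) with ((b - a) * (b - a) * (b - a)) by ring. exact H.
Qed.

Lemma trapezoid_error :
  Rabs ((b - a) / 2 * (f a + f b) - (F b - F a)) <= K * (b - a) ^ 3 / 12.
Proof.
  pose proof (trapezoid_error_signed 1 ltac:(lra)).
  pose proof (trapezoid_error_signed (-1) ltac:(lra)).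
  apply Rabs_le; lra.
Qed.

End Trapezoid.

(* The trapezoid bound for the normalized integral Defs.RInt, assuming f differentiable on an
   open neighbourhood of [a,b] (so that x |-> int_a^x f is an antiderivative on all of [a,b]). *)
Lemma trapezoid_error_RInt (f f1 f2 : R -> R) a b d K : a < b -> 0 < d ->
  (forall x, a - d < x < b + d -> derivable_pt_lim f x (f1 x)) ->
  (forall x, a <= x <= b -> derivable_pt_lim f1 x (f2 x)) ->
  (forall x, a <= x <= b -> Rabs (f2 x) <= K) ->
  Rabs ((f a + f b) / 2 - 1 / (b - a) * Defs.RInt f a b) <= K * (b - a) ^ 2 / 12.
Proof.
  intros Hab Hd Hf Hf1 HK.
  assert (Hcont : forall x, a - d < x < b + d -> continuous f x).
  { intros x Hx. apply continuity_pt_filterlim, derivable_continuous_pt.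
    exists (f1 x); exact (Hf x Hx). }
  assert (Hex : forall y, a - d < y < b + d -> ex_RInt f a y).
  { intros y Hy. apply (@ex_RInt_continuous R_CompleteNormedModule). intros z Hz. apply Hcont.
    unfold Rmin, Rmax in Hz; destruct (Rle_dec a y); lra. }
  set (Phi := fun x => RInt f a x).
  assert (HPhi : forall x, a <= x <= b -> is_derive Phi x (f x)).
  { intros x Hx. apply is_derive_RInt with a; [| apply Hcont; lra].
    apply (filter_imp (fun y => a - d < y /\ y < b + d)).
    - intros y Hy; apply RInt_correct, Hex; exact Hy.
    - apply open_and; [apply open_gt | apply open_lt | lra]. }
  assert (HRInt : Defs.RInt f a b = Phi b - Phi a).
  { unfold Phi. rewrite (@RInt_point R_CompleteNormedModule), Rminus_0_r.
    apply Defs_RInt_of_is_RInt, (@RInt_correct R_CompleteNormedModule), Hex; lra. }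
  pose proof (trapezoid_error f f1 f2 Phi a b K ltac:(lra) HPhi
                (fun x Hx => proj2 (is_derive_Reals _ _ _) (Hf x ltac:(lra)))
                (fun x Hx => proj2 (is_derive_Reals _ _ _) (Hf1 x Hx)) HK) as Htrap.
  replace ((b - a) / 2 * (f a + f b) - (Phi b - Phi a))
    with ((b - a) * ((f a + f b) / 2 - 1 / (b - a) * Defs.RInt f a b)) in Htrap
    by (rewrite HRInt; field; lra).
  rewrite Rabs_mult, Rabs_pos_eq in Htrap by lra.
  apply (Rmult_le_reg_l (b - a)); [lra |].
  replace ((b - a) * (K * (b - a) ^ 2 / 12)) with (K * (b - a) ^ 3 / 12) by field.
  exact Htrap.
Qed.

Lemma interval_interior_nbhd (I : R -> Prop) a b : is_interval I -> a <= b ->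
  interior I a -> interior I b -> exists d, 0 < d /\ forall x, a - d < x < b + d -> interior I x.
Proof.
  intros HI Hab [da Hda] [db Hdb].
  set (d := Rmin da db / 2).
  pose proof (Rmin_pos da db (cond_pos da) (cond_pos db)).
  pose proof (Rmin_l da db). pose proof (Rmin_r da db).
  assert (HIa : I a) by (apply Hda; unfold disc; rewrite Rminus_diag, Rabs_R0; apply cond_pos).
  assert (HIb : I b) by (apply Hdb; unfold disc; rewrite Rminus_diag, Rabs_R0; apply cond_pos).
  assert (HI2d : forall y, a - 2 * d < y < b + 2 * d -> I y).
  { intros y Hy. destruct (Rlt_or_le y a); [| destruct (Rle_or_lt y b)].
    - apply Hda; unfold disc, d in *; apply Rabs_def1; lra.
    - apply (HI a y b); auto.
    - apply Hdb; unfold disc, d in *; apply Rabs_def1; lra. }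
  exists d; split; [unfold d; lra |].
  intros x Hx. assert (Hd : 0 < d) by (unfold d; lra).
  exists (mkposreal d Hd). intros y Hy. unfold disc in Hy; simpl in Hy.
  apply HI2d. apply Rabs_def2 in Hy. lra.
Qed.

Lemma quasi_convex_le_max (g : R -> R) a b x : a < b -> quasi_convex_on g a b ->
  a <= x <= b -> g x <= Rmax (g a) (g b).
Proof.
  intros Hab Hg Hx.
  assert (Hlam : 0 <= (b - x) / (b - a) <= 1).
  { split; [apply Rdiv_le_0_compat; lra |].
    apply (Rmult_le_reg_r (b - a)); [lra |]. field_simplify; lra. }
  pose proof (Hg a b ((b - x) / (b - a)) ltac:(lra) ltac:(lra) Hlam) as H.
  replace ((b - x) / (b - a) * a + (1 - (b - x) / (b - a)) * b) with x in H by (field; lra).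
  exact H.
Qed.

Theorem theorem2p3
  (I : R -> Prop) (HI : is_interval I) (HI0 : forall x, I x -> 0 <= x)
  (f f1 f2 : R -> R)
  (Hf1 : forall x, interior I x -> derivable_pt_lim f x (f1 x))
  (Hf2 : forall x, interior I x -> derivable_pt_lim f1 x (f2 x))
  (a b : R) (Ha : interior I a) (Hb : interior I b) (Hab : a < b)
  (Hint : Riemann_integrable f2 a b)
  (q : R) (Hq : 1 < q)
  (Hqc : quasi_convex_on (fun x => rpow (Rabs (f2 x)) q) a b) :
  let p := q / (q - 1) in
  Rabs ((f a + f b) / 2 - 1 / (b - a) * Defs.RInt f a b)
  <= (b - a) ^ 2 / rpow 2 (1 + 1 / q)
     * rpow (beta 2 (p + 1)) (1 / p)
     * rpow (Rmax (rpow (Rabs (f2 a)) q) (rpow (Rabs (f2 b)) q)) (1 / q).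
Proof.
  intros p.
  assert (Hp : 1 < p) by (unfold p; apply (Rmult_lt_reg_r (q - 1)); [lra | field_simplify; lra]).
  set (K := rpow (Rmax (rpow (Rabs (f2 a)) q) (rpow (Rabs (f2 b)) q)) (1 / q)).
  assert (HK : forall x, a <= x <= b -> Rabs (f2 x) <= K).
  { intros x Hx. rewrite <- (rpow_rpow_inv (Rabs (f2 x)) q) by (try apply Rabs_pos; lra).
    apply rpow_le_base; [| left; apply Rdiv_lt_0_compat; lra].
    split; [apply rpow_ge0 | exact (quasi_convex_le_max _ a b x Hab Hqc Hx)]. }
  destruct (interval_interior_nbhd I a b HI ltac:(lra) Ha Hb) as [d [Hd Hnbhd]].
  pose proof (trapezoid_error_RInt f f1 f2 a b d K Hab Hd (fun x Hx => Hf1 x (Hnbhd x Hx))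
                (fun x Hx => Hf2 x (Hnbhd x ltac:(lra))) HK) as Htrap.
  pose proof (trapezoid_constant_le p Hp) as Hconst.
  rewrite beta_2, !rpow_Rpower by (try apply Rdiv_lt_0_compat; nra).
  replace (1 + 1 / q) with (2 - 1 / p) by (unfold p; field; lra).
  set (C := Rpower (1 / ((p + 1) * (p + 2))) (1 / p) / Rpower 2 (2 - 1 / p)) in Hconst.
  assert (HK0 : 0 <= K) by apply rpow_ge0.
  apply (Rle_trans _ _ _ Htrap).
  replace ((b - a) ^ 2 / Rpower 2 (2 - 1 / p) * Rpower (1 / ((p + 1) * (p + 2))) (1 / p) * K)
    with (K * (b - a) ^ 2 * C) by (unfold C; field; apply Rgt_not_eq, exp_pos).
  assert (0 <= K * (b - a) ^ 2) by (apply Rmult_le_pos; [lra | apply pow2_ge_0]).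
  nra.
Qed.
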